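(* Let $X$ be a nonempty countable set, $\mathcal D$ a distribution on $X$, $m\ge1$, $S\sim\mathcal D^m$, and let $g$ be any random variable on the same probability space as $S$ taking values in a finite nonempty set $G$. For $g_0\in G$ with $\Pr[g=g_0]>0$ let $\mathcal D_{\mathrm{goal}}(g_0)=\mathbb E[\mathrm{Unif}(S)\mid g=g_0]$. Then $$\mathbb E_g\big[d_{\mathrm{TV}}(\mathcal D,\mathcal D_{\mathrm{goal}}(g))\big]\le\sqrt{\frac{\ln|G|}{2m}}.$$
   Context: For a tuple $S=(S_1,\dots,S_m)$, $\mathrm{Unif}(S)$ is the law of $S_i$ for $i$ uniform on $[m]$; $\mathbb E[\mathrm{Unif}(S)\mid g=g_0]$ is the corresponding mixture (law of a uniformly random coordinate of $S$ conditioned on $g=g_0$). $d_{\mathrm{TV}}$ is total variation distance. *)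

From HB Require Import structures.
From mathcomp Require Import all_boot all_order all_algebra.
From mathcomp Require Import all_classical all_reals all_analysis.
Set Implicit Arguments. Unset Strict Implicit. Unset Printing Implicit Defensive.
Import Order.TTheory GRing.Theory Num.Theory.
Local Open Scope classical_set_scope.
Local Open Scope ring_scope.

Section Defs.
Variable R : realType.

Definition is_pmf (X : countType) (D : X -> R) : Prop :=
  (forall x, 0 <= D x) /\ (\esum_(x in [set: X]) (D x)%:E = 1)%E.

Definition prod_pmf (X : countType) (m : nat) (D : X -> R)
  (s : {ffun 'I_m -> X}) : R := \prod_(i < m) D (s i).

(* Markov kernel from samples to G : the conditional law of g given S.
   The joint law of (S, g) is P(S = s, g = g0) = prod_pmf D s * q s g0. *)
Definition is_kernel (A : Type) (G : finType) (q : A -> G -> R) : Prop :=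
  (forall a g0, 0 <= q a g0) /\ (forall a, \sum_(g0 : G) q a g0 = 1).

Definition prob_g (X : countType) (G : finType) (m : nat) (D : X -> R)
  (q : {ffun 'I_m -> X} -> G -> R) (g0 : G) : R :=
  fine (\esum_(s in [set: {ffun 'I_m -> X}]) (prod_pmf D s * q s g0)%:E).

Definition unif_pmf (X : countType) (m : nat) (s : {ffun 'I_m -> X}) (x : X) : R :=
  (#|[set i : 'I_m | s i == x]|)%:R / m%:R.

Definition D_goal (X : countType) (G : finType) (m : nat) (D : X -> R)
  (q : {ffun 'I_m -> X} -> G -> R) (g0 : G) (x : X) : R :=
  fine (\esum_(s in [set: {ffun 'I_m -> X}])
          (prod_pmf D s * q s g0 * unif_pmf s x)%:E) / prob_g D q g0.

Definition dTV (X : countType) (P Q : X -> R) : R :=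
  fine (\esum_(x in [set: X]) (`|P x - Q x|)%:E) / 2.

Definition expected_dTV (X : countType) (G : finType) (m : nat) (D : X -> R)
  (q : {ffun 'I_m -> X} -> G -> R) : R :=
  \sum_(g0 : G | 0 < prob_g D q g0) prob_g D q g0 * dTV D (D_goal D q g0).

End Defs.

(* For g with Pr[g] > 0 let A_g = {x | D x < D_goal(g) x}.  Then
   dTV(D, D_goal(g)) = D_goal(g)(A_g) - D(A_g), and D_goal(g)(A_g) is the
   conditional mean of the empirical frequency Unif(S)(A_g), so
   E_g[dTV] <= E[Y] with Y(S) = sum_g q(S,g) (Unif(S)(A_g) - D(A_g)), where
   q(S,.) is the conditional law of g given S.  Since Y(S) is a convex
   combination, convexity of exp gives, for mu > 0,
     exp(mu E[Y]) <= E[exp(mu Y)] <= sum_g E[exp(mu (Unif(S)(A_g) - D(A_g)))]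
                 <= |G| exp(mu^2 / (8 m)),
   the last step being Hoeffding's lemma for the m independent indicators
   [S_i \in A_g].  Hence E[Y] <= ln|G| / mu + mu / (8 m), and optimising in
   mu gives sqrt(ln|G| / (2 m)). *)

From HB Require Import structures.
From mathcomp Require Import all_boot all_order all_algebra.
From mathcomp Require Import all_classical all_reals all_analysis.
From mathcomp Require Import ring lra.
Set Implicit Arguments. Unset Strict Implicit. Unset Printing Implicit Defensive.
Import Order.TTheory GRing.Theory Num.Theory numFieldNormedType.Exports.
Local Open Scope classical_set_scope.
Local Open Scope ring_scope.

Section NonnegativeSums.
Variables (R : realType) (T : choiceType).

Lemma esumZl (S : set T) (c : R) (a : T -> \bar R) :
  0 <= c -> (forall x, S x -> (0 <= a x)%E) ->
  (\esum_(x in S) (c%:E * a x) = c%:E * \esum_(x in S) a x)%E.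
Proof.
move=> c0 a0; rewrite /esum -ereal_supZl //; last first.
  by apply/set0P; exists 0%E, set0; [exact: fsets_set0|rewrite fsbig_set0].
have sumZ (A : set T) : finite_set A -> A `<=` S ->
    (\sum_(x \in A) (c%:E * a x) = c%:E * \sum_(x \in A) a x)%E.
  move=> finA AS; rewrite !fsbig_finite //= big_seq [in RHS]big_seq.
  by rewrite ge0_sume_distrr // => x; rewrite in_fset_set // inE => /AS; exact: a0.
congr ereal_sup; apply/seteqP; split.
- by move=> _ [A [finA AS] <-]; exists (\sum_(x \in A) a x)%E; [exists A|rewrite sumZ].
- by move=> _ [_ [A [finA AS] <-] <-]; exists A => //; rewrite sumZ.
Qed.

Definition psummable (f : T -> R) : Prop :=
  (forall x, 0 <= f x) /\ (\esum_(x in [set: T]) (f x)%:E < +oo)%E.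

Definition psum (f : T -> R) : R := fine (\esum_(x in [set: T]) (f x)%:E).

Lemma psumE f : psummable f -> \esum_(x in [set: T]) (f x)%:E = (psum f)%:E.
Proof.
move=> [f0 fo]; rewrite /psum fineK // ge0_fin_numE //.
by apply: esum_ge0 => x _; rewrite lee_fin.
Qed.

Lemma psummable_of_esum f c : (forall x, 0 <= f x) ->
  \esum_(x in [set: T]) (f x)%:E = c%:E -> psummable f.
Proof. by move=> f0 fc; rewrite /psummable fc ltry. Qed.

Lemma psum_of_esum f c : \esum_(x in [set: T]) (f x)%:E = c%:E -> psum f = c.
Proof. by rewrite /psum => ->. Qed.

Lemma psum_ge0 f : (forall x, 0 <= f x) -> 0 <= psum f.
Proof. by move=> f0; apply: fine_ge0; apply: esum_ge0 => x _; rewrite lee_fin. Qed.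

Lemma eq_psum f g : f =1 g -> psum f = psum g.
Proof. by move=> /funext ->. Qed.

Lemma eq_psummable f g : f =1 g -> psummable g -> psummable f.
Proof. by move=> /funext ->. Qed.

Section Domination.
Variables f g : T -> R.
Hypothesis fg : forall x, 0 <= f x <= g x.
Hypothesis sg : psummable g.

Lemma psummable_le : psummable f.
Proof.
split=> [x|]; first by case/andP: (fg x).
by apply: le_lt_trans sg.2; apply: le_esum => x _; rewrite lee_fin; case/andP: (fg x).
Qed.

Lemma ler_psum : psum f <= psum g.
Proof.
rewrite -lee_fin -!psumE //; last exact: psummable_le.
by apply: le_esum => x _; rewrite lee_fin; case/andP: (fg x).
Qed.

End Domination.

Section Linearity.
Variables f g : T -> R.
Hypotheses (sf : psummable f) (sg : psummable g).

Let esumD_fin : \esum_(x in [set: T]) (f x + g x)%:E = (psum f + psum g)%:E.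
Proof.
rewrite (eq_esum (b := fun x => (f x)%:E + (g x)%:E)%E) // esumD ?psumE //.
- by move=> x _; rewrite lee_fin; apply: sf.1.
- by move=> x _; rewrite lee_fin; apply: sg.1.
Qed.

Let f_plus_g_ge0 x : 0 <= f x + g x.
Proof. by rewrite addr_ge0 ?sf.1 ?sg.1. Qed.

Lemma psummableD : psummable (fun x => f x + g x).
Proof. exact: psummable_of_esum f_plus_g_ge0 esumD_fin. Qed.

Lemma psumD : psum (fun x => f x + g x) = psum f + psum g.
Proof. exact: psum_of_esum esumD_fin. Qed.

Variable c : R.
Hypothesis c0 : 0 <= c.

Let esumZ_fin : \esum_(x in [set: T]) (c * f x)%:E = (c * psum f)%:E.
Proof.
rewrite (eq_esum (b := fun x => c%:E * (f x)%:E)%E) // esumZl ?psumE //.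
by move=> x _; rewrite lee_fin; apply: sf.1.
Qed.

Let cf_ge0 x : 0 <= c * f x.
Proof. by rewrite mulr_ge0 ?sf.1. Qed.

Lemma psummableZ : psummable (fun x => c * f x).
Proof. exact: psummable_of_esum cf_ge0 esumZ_fin. Qed.

Lemma psumZ : psum (fun x => c * f x) = c * psum f.
Proof. exact: psum_of_esum esumZ_fin. Qed.

End Linearity.

Lemma psummable_sum (I : Type) (s : seq I) (F : I -> T -> R) :
  (forall i, psummable (F i)) -> psummable (fun x => \sum_(i <- s) F i x).
Proof.
move=> sF; elim: s => [|i s IH].
  apply: (@psummable_of_esum _ 0) => [x|]; first by rewrite big_nil.
  by apply: esum1 => x _; rewrite big_nil.
by apply: eq_psummable (psummableD (sF i) IH) => x; rewrite big_cons.
Qed.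

Lemma psum_sum (I : Type) (s : seq I) (F : I -> T -> R) :
  (forall i, psummable (F i)) ->
  psum (fun x => \sum_(i <- s) F i x) = \sum_(i <- s) psum (F i).
Proof.
move=> sF; elim: s => [|i s IH].
  by rewrite big_nil /psum esum1 // => x _; rewrite big_nil.
rewrite big_cons -IH -psumD //; last exact: psummable_sum.
by apply: eq_psum => x; rewrite big_cons.
Qed.

Section Dirac.
Variables (a : T) (c : R).
Hypothesis c0 : 0 <= c.

Let dirac_ge0 x : 0 <= if x == a then c else 0.
Proof. by case: eqP. Qed.

Let esum_dirac : \esum_(x in [set: T]) (if x == a then c else 0)%:E = c%:E.
Proof.
rewrite -(@esum_set1 R T a (fun=> c%:E)) ?lee_fin // [RHS]esum_mkcond.
by apply: eq_esum => x _; rewrite in_set1; case: (x == a).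
Qed.

Lemma psummable_dirac : psummable (fun x => if x == a then c else 0).
Proof. exact: psummable_of_esum dirac_ge0 esum_dirac. Qed.

Lemma psum_dirac : psum (fun x => if x == a then c else 0) = c.
Proof. exact: psum_of_esum esum_dirac. Qed.

End Dirac.

End NonnegativeSums.

Section Fubini.
Variables (R : realType) (T1 T2 : choiceType) (f : T1 -> T2 -> R).
Hypothesis f_ge0 : forall x y, 0 <= f x y.
Hypothesis f_rows : forall x, psummable (f x).
Hypothesis f_total : psummable (fun x => psum (f x)).

Let esum_rows :
  \esum_(x in [set: T1]) \esum_(y in [set: T2]) (f x y)%:E =
  (psum (fun x => psum (f x)))%:E.
Proof. by rewrite -psumE //; apply: eq_esum => x _; exact: psumE. Qed.

Let esum_swap :
  \esum_(x in [set: T1]) \esum_(y in [set: T2]) (f x y)%:E =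
  \esum_(y in [set: T2]) \esum_(x in [set: T1]) (f x y)%:E.
Proof.
rewrite !esum_esum; try by move=> x y _ _; rewrite lee_fin.
rewrite (reindex_esum ([set: T2] `*`` (fun=> [set: T1])) _ (fun k => (k.2, k.1))) //.
split=> //= [[? ?] [? ?] _ _ /= [-> ->] //|[x y] _].
by exists (y, x).
Qed.

Lemma psummable_col y : psummable (fun x => f x y).
Proof.
split=> //; apply: (@le_lt_trans _ _ (psum (fun x => psum (f x)))%:E); last exact: ltry.
rewrite -esum_rows esum_swap; apply: esum_ge; exists [set y]; last by rewrite fsbig_set1.
by split=> //; exact: finite_set1.
Qed.

Let esum_cols :
  \esum_(y in [set: T2]) \esum_(x in [set: T1]) (f x y)%:E =
  \esum_(y in [set: T2]) (psum (fun x => f x y))%:E.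
Proof. by apply: eq_esum => y _; exact/psumE/psummable_col. Qed.

Lemma psummable_psum_col : psummable (fun y => psum (fun x => f x y)).
Proof.
split=> [y|]; first exact: psum_ge0.
by rewrite -esum_cols -esum_swap esum_rows ltry.
Qed.

Lemma psum_swap :
  psum (fun x => psum (f x)) = psum (fun y => psum (fun x => f x y)).
Proof.
have := esum_rows; rewrite esum_swap esum_cols psumE; last exact: psummable_psum_col.
by case.
Qed.

End Fubini.

Section FfunCons.
Variable T : Type.

Definition ffun_cons (n : nat) (p : T * {ffun 'I_n -> T}) : {ffun 'I_n.+1 -> T} :=
  [ffun i => if unlift ord0 i is Some j then p.2 j else p.1].

Lemma ffun_cons0 n (p : T * {ffun 'I_n -> T}) : ffun_cons p ord0 = p.1.
Proof. by rewrite ffunE unlift_none. Qed.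

Lemma ffun_consS n (p : T * {ffun 'I_n -> T}) j : ffun_cons p (lift ord0 j) = p.2 j.
Proof. by rewrite ffunE liftK. Qed.

Lemma ffun_cons_bij n :
  set_bij ([set: T] `*`` (fun=> [set: {ffun 'I_n -> T}])) [set: {ffun 'I_n.+1 -> T}]
    (@ffun_cons n).
Proof.
split=> //= [[x1 s1] [x2 s2] _ _ /= E|t _].
  have := congr1 (fun t : {ffun 'I_n.+1 -> T} => t ord0) E; rewrite /= !ffun_cons0 /= => ->.
  congr pair; apply/ffunP => j.
  by have := congr1 (fun t : {ffun 'I_n.+1 -> T} => t (lift ord0 j)) E; rewrite /= !ffun_consS.
exists (t ord0, [ffun j => t (lift ord0 j)]) => //.
apply/ffunP => i; rewrite ffunE.
by case: unliftP => [j ->|->] /=; rewrite ?ffunE.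
Qed.

End FfunCons.

Section ProductSums.
Variables (R : realType) (T : choiceType) (f : T -> R).
Hypothesis sf : psummable f.

Let prod_ge0 n (s : {ffun 'I_n -> T}) : 0 <= \prod_(i < n) f (s i).
Proof. by apply: prodr_ge0 => i _; exact: sf.1. Qed.

Let esum_prod n :
  \esum_(s in [set: {ffun 'I_n -> T}]) (\prod_(i < n) f (s i))%:E = (psum f ^+ n)%:E.
Proof.
elim: n => [|n IH].
  pose s0 : {ffun 'I_0 -> T} := ffun0 (card_ord 0).
  have -> : [set: {ffun 'I_0 -> T}] = [set s0].
    by apply/seteqP; split=> s _ //=; apply/ffunP => -[].
  by rewrite esum_set1 ?big_ord0 ?expr0 // lee_fin.
rewrite (reindex_esum _ _ _ _ (@ffun_cons_bij T n)).
pose F x (s : {ffun 'I_n -> T}) := (\prod_(i < n.+1) f (ffun_cons (x, s) i))%:E.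
transitivity (\esum_(k in [set: T] `*`` (fun=> [set: {ffun 'I_n -> T}])) F k.1 k.2).
  by apply: eq_esum => -[x s].
rewrite -esum_esum; last by move=> x s _ _; rewrite lee_fin.
transitivity (\esum_(x in [set: T]) ((psum f ^+ n)%:E * (f x)%:E))%E.
  apply: eq_esum => x _; rewrite muleC -IH -esumZl; last first.
  - by move=> s _; rewrite lee_fin.
  - exact: sf.1.
  apply: eq_esum => s _; rewrite /F big_ord_recl ffun_cons0 -EFinM.
  by congr (_ * _)%:E; apply: eq_bigr => i _; rewrite ffun_consS.
rewrite esumZl ?psumE ?exprSr ?EFinM //; last by move=> x _; rewrite lee_fin; exact: sf.1.
exact/exprn_ge0/psum_ge0/sf.1.
Qed.

Lemma psummable_prod n : psummable (fun s : {ffun 'I_n -> T} => \prod_(i < n) f (s i)).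
Proof. exact: psummable_of_esum (@prod_ge0 n) (esum_prod n). Qed.

Lemma psum_prod n : psum (fun s : {ffun 'I_n -> T} => \prod_(i < n) f (s i)) = psum f ^+ n.
Proof. exact: psum_of_esum (esum_prod n). Qed.

End ProductSums.

Section Events.
Variables (R : realType) (T : choiceType) (D : T -> R).
Hypothesis sD : psummable D.

Definition pmass (A : pred T) : R := psum (fun x => D x * (A x)%:R).

Lemma psummable_restrict (A : pred T) : psummable (fun x => D x * (A x)%:R).
Proof.
apply: psummable_le sD => x; have D0 := sD.1 x.
by rewrite mulr_ge0 //= ler_piMr //; case: (A x).
Qed.

Lemma pmass_ge0 A : 0 <= pmass A.
Proof. by apply: psum_ge0 => x; rewrite mulr_ge0 ?sD.1. Qed.

Lemma pmass_le A : pmass A <= psum D.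
Proof.
apply: ler_psum sD => x; have D0 := sD.1 x.
by rewrite mulr_ge0 //= ler_piMr //; case: (A x).
Qed.

Lemma pmassT : pmass predT = psum D.
Proof. by apply: eq_psum => x; rewrite mulr1. Qed.

Lemma pmassC A : pmass A + pmass (predC A) = psum D.
Proof.
rewrite /pmass -psumD; try exact: psummable_restrict.
by apply: eq_psum => x /=; case: (A x); rewrite /= ?mulr1 ?mulr0 ?addr0 ?add0r.
Qed.

End Events.

Lemma dTV_pmass_gt (R : realType) (X : countType) (D F : X -> R) :
  psummable D -> psum D = 1 -> psummable F -> psum F = 1 ->
  let A := [pred x | D x < F x] in dTV D F = pmass F A - pmass D A.
Proof.
move=> sD D1 sF F1 A.
have pointwise x : `|D x - F x| + 2 * (D x * (A x)%:R + F x * (predC A x)%:R) = D x + F x.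
  have [D0 F0] := (sD.1 x, sF.1 x); rewrite /A /=.
  by case: ltrP => h /=; rewrite ?ler0_norm ?ger0_norm ?subr_ge0 ?subr_le0 1?ltW //; lra.
have s_norm : psummable (fun x => `|D x - F x|).
  apply: psummable_le (psummableD sD sF) => x; rewrite normr_ge0 /=.
  by rewrite (le_trans (ler_normB _ _)) // !ger0_norm ?sD.1 ?sF.1.
have [sDA sFC] := (psummable_restrict sD A, psummable_restrict sF (predC A)).
have := eq_psum pointwise.
rewrite (psumD s_norm (psummableZ (psummableD sDA sFC) _)) ?ler0n //.
rewrite (psumZ (psummableD sDA sFC)) ?ler0n // (psumD sDA sFC) (psumD sD sF) D1 F1.
rewrite -/(pmass D A) -/(pmass F (predC A)).
have := pmassC sF A; rewrite F1 /dTV -/(psum _); lra.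
Qed.

Section HoeffdingBernoulli.
Variable R : realType.

Lemma is_derive_within_continuous (f df : R -> R) (a b : R) :
  (forall x, is_derive x (1 : R) f (df x)) -> {within `[a, b], continuous f}.
Proof.
move=> fd; apply/continuous_subspaceT => x.
by apply/differentiable_continuous/derivable1_diffP; case: (fd x).
Qed.

Variable p : R.
Hypothesis p01 : 0 <= p <= 1.

Let mgf x := 1 - p + p * expR x.

Let mgf_gt0 x : 0 < mgf x.
Proof.
have [p0 p1] := andP p01; have := expR_gt0 x; rewrite /mgf.
have [->|pn0] := eqVneq p 0; first by rewrite mul0r addr0 subr0 ltr01.
have : 0 < p by rewrite lt0r pn0.
nra.
Qed.

Let is_derive_mgf x : is_derive x (1 : R) mgf (p * expR x).
Proof.
have := is_deriveD (is_derive_cst (1 - p) x (1 : R)) (is_deriveZ p (is_derive_expR x)).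
by rewrite add0r => H; apply: is_derive_eq H _.
Qed.

(* The derivative of [ln mgf] at [x] is the tilted mean [p e^x / mgf x]; its own
   derivative [(1 - p) p e^x / mgf x ^ 2] is at most [1/4] by AM-GM. *)
Lemma tilted_mean_le c : 0 <= c -> p * expR c / mgf c - p <= c / 4.
Proof.
move=> c0; pose tilt x := 1 - (1 - p) * (mgf x)^-1.
have tiltE x : tilt x = p * expR x / mgf x.
  by rewrite /tilt /mgf; field; rewrite gt_eqF // mgf_gt0.
have dtilt x : is_derive x (1 : R) tilt ((1 - p) * (p * expR x) / mgf x ^+ 2).
  have := is_deriveB (is_derive_cst (1 : R) x (1 : R))
    (is_deriveZ (1 - p) (is_deriveV (lt0r_neq0 (mgf_gt0 x)) (is_derive_mgf x))).
  by move=> H; apply: is_derive_eq H _; rewrite /GRing.scale /=; field; rewrite gt_eqF.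
have [d _ tiltD] :=
  MVT_segment c0 (fun x _ => dtilt x) (@is_derive_within_continuous _ _ 0 c dtilt).
have tilt0 : tilt 0 = p by rewrite tiltE /mgf expR0 mulr1 subrK divr1.
rewrite -tiltE -tilt0 tiltD subr0 mulrC ler_wpM2l // ler_pdivrMr ?exprn_gt0 //.
have := sqr_ge0 (1 - p - p * expR d); rewrite /mgf; nra.
Qed.

Lemma bernoulli_mgf_le l : 0 <= l -> mgf l <= expR (l * p + l ^+ 2 / 8).
Proof.
move=> l0; pose h x := ln (mgf x) - p * x - 8^-1 * x ^+ 2.
have dh x : is_derive x (1 : R) h (p * expR x / mgf x - p - x / 4).
  have dln : is_derive x (1 : R) ((@ln R) \o mgf) ((mgf x)^-1 * (p * expR x)).
    exact: is_derive1_comp (is_derive1_ln (mgf_gt0 x)) (is_derive_mgf x).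
  have := is_deriveB (is_deriveB dln (is_deriveZ p (is_derive_id x (1 : R))))
    (is_deriveZ (8^-1 : R) (is_deriveX 2 (is_derive_id x (1 : R)))).
  by move=> H; apply: is_derive_eq H _; rewrite /GRing.scale /=; field; rewrite gt_eqF.
have [d d0l hD] :=
  MVT_segment l0 (fun x _ => dh x) (@is_derive_within_continuous _ _ 0 l dh).
have d0 : 0 <= d by move: d0l; rewrite in_itv /= => /andP[].
have h0 : h 0 = 0 by rewrite /h /mgf expR0 mulr1 subrK ln1 mulr0 expr0n /= mulr0 !subr0.
have hl : h l <= 0.
  have : h l - h 0 <= 0 by rewrite hD subr0 mulr_le0_ge0 //; have := tilted_mean_le d0; lra.
  by rewrite h0 subr0.
have : ln (mgf l) <= l * p + l ^+ 2 / 8 by move: hl; rewrite /h; lra.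
by rewrite -ler_expR lnK ?posrE.
Qed.

End HoeffdingBernoulli.

Section ExpConvexity.
Variable R : realType.

Lemma expR_tangent (c y : R) : expR c * (1 + (y - c)) <= expR y.
Proof. by rewrite -{2}(subrKC c y) expRD ler_wpM2l ?expR_ge0 // expR_ge1Dx. Qed.

Lemma expR_sum_convex (I : finType) (w a : I -> R) :
  (forall i, 0 <= w i) -> \sum_i w i = 1 ->
  expR (\sum_i w i * a i) <= \sum_i w i * expR (a i).
Proof.
move=> w0 w1; set c := \sum_i w i * a i.
apply: le_trans (_ : \sum_i w i * (expR c * (1 + (a i - c))) <= _); last first.
  by apply: ler_sum => i _; rewrite ler_wpM2l ?expR_tangent.
rewrite (eq_bigr (fun i => expR c * w i + expR c * (w i * a i) - expR c * c * w i)).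
  by rewrite !sumrB big_split /= -!mulr_sumr w1 -/c; lra.
by move=> i _; ring.
Qed.

Lemma expR_psum_convex (T : choiceType) (P f : T -> R) (mu : R) :
  0 <= mu -> psummable P -> psum P = 1 -> (forall s, 0 <= f s) ->
  psummable (fun s => P s * f s) -> psummable (fun s => P s * expR (mu * f s)) ->
  expR (mu * psum (fun s => P s * f s)) <= psum (fun s => P s * expR (mu * f s)).
Proof.
move=> mu0 sP P1 f0 sPf sPe; set c := psum _; set E := expR (mu * c).
have E0 : 0 <= E := expR_ge0 _.
have c0 : 0 <= c by apply: psum_ge0 => s; rewrite mulr_ge0 ?sP.1.
have sPE := psummableZ sP E0.
have sPfE := psummableZ sPf (mulr_ge0 E0 mu0).
have sPc := psummableZ sP (mulr_ge0 (mulr_ge0 E0 mu0) c0).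
have pointwise s : 0 <= E * P s + E * mu * (P s * f s) <=
    P s * expR (mu * f s) + E * mu * c * P s.
  have [P0 f0s] := (sP.1 s, f0 s); apply/andP; split.
    by rewrite addr_ge0 ?mulr_ge0.
  rewrite -subr_ge0 (_ : _ - _ = P s * (expR (mu * f s) - E * (1 + (mu * f s - mu * c)))).
    by rewrite mulr_ge0 // subr_ge0 expR_tangent.
  by rewrite /E; ring.
have := ler_psum pointwise (psummableD sPe sPc).
rewrite (psumD sPE sPfE) (psumD sPe sPc) !psumZ ?mulr_ge0 // P1 -/c; lra.
Qed.

End ExpConvexity.

Lemma le_sqrt_of_forall_pos (R : realType) (L c e : R) : 0 <= L -> 0 < c ->
  (forall lam, 0 < lam -> e <= L / (lam * c) + lam / 8) ->
  e <= Num.sqrt (L / (2 * c)).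
Proof.
move=> L0 c0 H; set s := Num.sqrt _.
have Ls : L = 2 * c * s ^+ 2.
  rewrite /s sqr_sqrtr; first by field; exact: lt0r_neq0.
  by rewrite divr_ge0 // mulr_ge0 // ltW.
have [s0|] := ltrP 0 s.
  have := H (4 * s) (mulr_gt0 (ltr0n _ 4) s0).
  by rewrite Ls; congr (_ <= _); field; rewrite !gt_eqF.
rewrite le_eqVlt ltNge sqrtr_ge0 orbF => /eqP s0.
rewrite s0 leNgt; apply/negP => e0; have := H (4 * e) (mulr_gt0 (ltr0n _ 4) e0).
rewrite Ls s0 expr0n /= mulr0 mul0r add0r; lra.
Qed.

Section EmpiricalMeasure.
Context {R : realType} (X : countType) (m : nat).
Hypothesis m_gt0 : (0 < m)%N.
Local Notation sample := {ffun 'I_m -> X}.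
Local Notation unif := (@unif_pmf R X m).

Let m_neq0 : m%:R != 0 :> R.
Proof. by rewrite pnatr_eq0 -lt0n. Qed.

Let invm_ge0 : 0 <= m%:R^-1 :> R.
Proof. by rewrite invr_ge0 ler0n. Qed.

Definition emp_mass (s : sample) (A : pred X) : R := (\sum_(i < m) (A (s i))%:R) / m%:R.

Lemma emp_mass_ge0 s A : 0 <= emp_mass s A.
Proof. by rewrite divr_ge0 ?sumr_ge0. Qed.

Lemma emp_massT s : emp_mass s predT = 1.
Proof. by rewrite /emp_mass sumr_const card_ord -mulr_natr mul1r mulfV. Qed.

Lemma emp_mass_le1 s A : emp_mass s A <= 1.
Proof.
rewrite -(emp_massT s) ler_pM2r ?invr_gt0 ?ltr0n //.
by apply: ler_sum => i _; case: (A (s i)).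
Qed.

Lemma unif_pmfE s x : unif s x = \sum_(i < m) (if x == s i then m%:R^-1 else 0).
Proof.
rewrite /unif_pmf -sum1_card natr_sum big_mkcond /= mulr_suml.
apply: eq_bigr => i _; rewrite unfold_in /= asboolb [s i == _]eq_sym.
by case: (x == s i); rewrite ?mul0r ?mul1r.
Qed.

Lemma psummable_unif s : psummable (unif s).
Proof.
by apply: eq_psummable (unif_pmfE s) (psummable_sum _ (fun i => psummable_dirac _ _)).
Qed.

Lemma pmass_unif s A : pmass (unif s) A = emp_mass s A.
Proof.
have pointwise x : unif s x * (A x)%:R =
    \sum_(i < m) (if x == s i then m%:R^-1 * (A (s i))%:R else 0).
  by rewrite unif_pmfE mulr_suml; apply: eq_bigr => i _; case: eqP => [->|]; rewrite ?mul0r.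
rewrite /pmass (eq_psum pointwise) psum_sum => [|i]; last exact: psummable_dirac.
rewrite /emp_mass mulr_suml; apply: eq_bigr => i _.
by rewrite psum_dirac ?mulr_ge0 // mulrC.
Qed.

Definition unif_mixture (w : sample -> R) (x : X) : R := psum (fun s => w s * unif s x).

Section Mixture.
Variable w : sample -> R.
Hypothesis sw : psummable w.

Let f (A : pred X) s x := w s * (unif s x * (A x)%:R).

Let f_ge0 A s x : 0 <= f A s x.
Proof. by rewrite mulr_ge0 ?sw.1 ?(psummable_restrict (psummable_unif s) A).1. Qed.

Let f_row A s : psummable (f A s).
Proof. exact: (psummableZ (psummable_restrict (psummable_unif s) A) (sw.1 s)). Qed.

Let psum_f_row A s : psum (f A s) = w s * emp_mass s A.
Proof.
rewrite psumZ ?sw.1 //; last exact: (psummable_restrict (psummable_unif s) A).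
by rewrite -[psum _]/(pmass (unif s) A) pmass_unif.
Qed.

Let f_total A : psummable (fun s => psum (f A s)).
Proof.
apply: psummable_le sw => s; rewrite psum_f_row mulr_ge0 ?sw.1 ?emp_mass_ge0 //=.
by rewrite ler_piMr ?sw.1 ?emp_mass_le1.
Qed.

Let unif_mixture_col x : psummable (fun s => w s * unif s x).
Proof.
by apply: eq_psummable (psummable_col (f_ge0 predT) (f_row predT) (f_total predT) x) => s;
  rewrite /f mulr1.
Qed.

Lemma psummable_unif_mixture : psummable (unif_mixture w).
Proof.
apply: eq_psummable (psummable_psum_col (f_ge0 predT) (f_row predT) (f_total predT)) => x.
by apply: eq_psum => s; rewrite /f mulr1.
Qed.

Lemma pmass_unif_mixture A : pmass (unif_mixture w) A = psum (fun s => w s * emp_mass s A).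
Proof.
have col x : unif_mixture w x * (A x)%:R = psum (fun s => f A s x).
  rewrite /unif_mixture mulrC -psumZ ?ler0n //.
  by apply: eq_psum => s; rewrite /f; ring.
rewrite /pmass (eq_psum col) -psum_swap //.
by apply: eq_psum => s; rewrite psum_f_row.
Qed.

End Mixture.
End EmpiricalMeasure.

Section SampleHoeffding.
Variables (R : realType) (X : countType) (m : nat) (D : X -> R).
Hypotheses (m_gt0 : (0 < m)%N) (sD : psummable D) (D1 : psum D = 1).
Local Notation P := (@prod_pmf R X m D).

Lemma psummable_prod_pmf : psummable P.
Proof. exact: psummable_prod. Qed.

Lemma psum_prod_pmf : psum P = 1.
Proof. by rewrite psum_prod // D1 expr1n. Qed.

Variables (A : pred X) (lam : R).
Hypothesis lam_ge0 : 0 <= lam.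

Let p := pmass D A.
Let h x := D x * expR (lam * (A x)%:R).

Let hE x : h x = D x + (expR lam - 1) * (D x * (A x)%:R).
Proof. by rewrite /h; case: (A x); rewrite ?mulr1 ?mulr0 ?expR0; ring. Qed.

Let expR_lam_ge1 : 0 <= expR lam - 1.
Proof. by rewrite subr_ge0 -expR0 ler_expR. Qed.

Let psummable_h : psummable h.
Proof.
apply: eq_psummable hE _; apply: psummableD sD _.
exact: (psummableZ (psummable_restrict sD A) expR_lam_ge1).
Qed.

Let psum_h : psum h = 1 - p + p * expR lam.
Proof.
have sDA := psummable_restrict sD A.
rewrite (eq_psum hE) (psumD sD (psummableZ sDA expR_lam_ge1)) (psumZ sDA expR_lam_ge1).
by rewrite D1 -/(pmass D A) -/p; ring.
Qed.

Let prod_pmf_expRE s : P s * expR (lam * m%:R * (emp_mass s A - p)) =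
  expR (- (lam * m%:R * p)) * \prod_(i < m) h (s i).
Proof.
have -> : lam * m%:R * (emp_mass s A - p) =
    - (lam * m%:R * p) + \sum_(i < m) lam * (A (s i))%:R.
  by rewrite -mulr_sumr /emp_mass; field; rewrite pnatr_eq0 -lt0n.
by rewrite expRD expR_sum /h big_split /= /prod_pmf; ring.
Qed.

Lemma psummable_prod_pmf_expR :
  psummable (fun s => P s * expR (lam * m%:R * (emp_mass s A - p))).
Proof.
apply: eq_psummable prod_pmf_expRE _.
exact: (psummableZ (psummable_prod psummable_h m) (expR_ge0 _)).
Qed.

Lemma psum_prod_pmf_expR_le :
  psum (fun s => P s * expR (lam * m%:R * (emp_mass s A - p))) <= expR (m%:R * (lam ^+ 2 / 8)).
Proof.
rewrite (eq_psum prod_pmf_expRE) psumZ ?expR_ge0 //; last exact: psummable_prod.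
rewrite psum_prod // psum_h.
have p01 : 0 <= p <= 1 by rewrite pmass_ge0 // -D1 pmass_le.
have mgf_ge0 : 0 <= 1 - p + p * expR lam.
  by have := expR_ge0 lam; case/andP: p01 => ? ?; nra.
apply: le_trans (ler_wpM2l (expR_ge0 _) (lerXn2r m _ _ (bernoulli_mgf_le p01 lam_ge0))) _;
  rewrite ?nnegrE ?expR_ge0 //.
by rewrite -expRM_natl -expRD ler_expR; lra.
Qed.

End SampleHoeffding.

Section Kernel.
Variables (R : realType) (X : countType) (G : finType) (m : nat).
Variables (D : X -> R) (q : {ffun 'I_m -> X} -> G -> R).
Hypotheses (m_gt0 : (0 < m)%N) (HD : is_pmf D) (Hq : is_kernel q).
Local Notation P := (@prod_pmf R X m D).
Local Notation pr := (prob_g D q).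

Let sD : psummable D.
Proof. by case: HD => D0 D1; split; rewrite // D1 ltry. Qed.

Let D1 : psum D = 1.
Proof. by rewrite /psum; case: HD => _ ->. Qed.

Let q_ge0 s g : 0 <= q s g.
Proof. by case: Hq. Qed.

Let q_sum1 s : \sum_g q s g = 1.
Proof. by case: Hq. Qed.

Let q_le1 s g : q s g <= 1.
Proof. by rewrite -(q_sum1 s) (bigD1 g) //= lerDl sumr_ge0. Qed.

Let sP := psummable_prod_pmf m sD.
Let P1 := psum_prod_pmf m sD D1.

Let w g s := P s * q s g.

Let w_ge0 g s : 0 <= w g s.
Proof. by rewrite mulr_ge0 ?sP.1. Qed.

Let sw g : psummable (w g).
Proof. by apply: psummable_le sP => s; rewrite w_ge0 /= ler_piMr ?sP.1. Qed.

Let sw_emp g A : psummable (fun s => w g s * emp_mass s A).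
Proof.
apply: psummable_le (sw g) => s.
by rewrite mulr_ge0 ?emp_mass_ge0 //= ler_piMr ?emp_mass_le1.
Qed.

Let pr_ge0 g : 0 <= pr g.
Proof. exact: psum_ge0 (w_ge0 g). Qed.

Let D_goalE g x : D_goal D q g x = unif_mixture (w g) x / pr g.
Proof. by []. Qed.

Let pmass_D_goal g A : pmass (D_goal D q g) A = psum (fun s => w g s * emp_mass s A) / pr g.
Proof.
have pr_inv_ge0 : 0 <= (pr g)^-1 by rewrite invr_ge0.
have sA := psummable_restrict (psummable_unif_mixture m_gt0 (sw g)) A.
rewrite -(pmass_unif_mixture m_gt0 (sw g)) /pmass mulrC -(psumZ sA pr_inv_ge0).
by apply: eq_psum => x; rewrite D_goalE; ring.
Qed.

Let psummable_D_goal g : psummable (D_goal D q g).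
Proof.
apply: eq_psummable (psummableZ (psummable_unif_mixture m_gt0 (sw g)) _) => [x|].
  by rewrite D_goalE mulrC.
by rewrite invr_ge0.
Qed.

Let psum_D_goal g : 0 < pr g -> psum (D_goal D q g) = 1.
Proof.
move=> pr_gt0; rewrite -(@pmassT _ _ (D_goal D q g)) pmass_D_goal.
by rewrite (eq_psum (g := w g)) ?divff ?gt_eqF // => s; rewrite emp_massT ?mulr1.
Qed.

Let goal_gt g : pred X := fun x => D x < D_goal D q g x.

Let dTV_D_goal g : 0 < pr g ->
  pr g * dTV D (D_goal D q g) =
  psum (fun s => w g s * emp_mass s (goal_gt g)) - pr g * pmass D (goal_gt g).
Proof.
move=> pr_gt0; rewrite (dTV_pmass_gt sD D1 (psummable_D_goal g) (psum_D_goal pr_gt0)).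
by rewrite pmass_D_goal mulrBr mulrCA divff ?mulr1 // gt_eqF.
Qed.

Let excess s := \sum_g q s g * (emp_mass s (goal_gt g) - pmass D (goal_gt g)).

Let excess1E s :
  excess s + 1 = \sum_g q s g * (emp_mass s (goal_gt g) - pmass D (goal_gt g) + 1).
Proof. by rewrite -{1}(q_sum1 s) -big_split /=; apply: eq_bigr => g _; ring. Qed.

Let excess1_ge0 s : 0 <= excess s + 1.
Proof.
rewrite excess1E sumr_ge0 // => g _; rewrite mulr_ge0 //.
have := emp_mass_ge0 (R := R) s (goal_gt g).
by have := pmass_le sD (goal_gt g); rewrite D1; lra.
Qed.

Let excess_le1 s : excess s <= 1.
Proof.
rewrite -(q_sum1 s) ler_sum // => g _; rewrite ler_piMr //.
have := emp_mass_le1 (R := R) m_gt0 s (goal_gt g).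
by have := pmass_ge0 sD (goal_gt g); lra.
Qed.

Let sP_excess1 : psummable (fun s => P s * (excess s + 1)).
Proof.
apply: psummable_le (psummableZ sP (ler0n _ 2)) => s.
by rewrite mulr_ge0 ?sP.1 //= [2 * _]mulrC ler_wpM2l ?sP.1 //; have := excess_le1 s; lra.
Qed.

Lemma expected_dTV_le_excess :
  expected_dTV D q <= psum (fun s => P s * (excess s + 1)) - 1.
Proof.
pose gain g := psum (fun s => w g s * emp_mass s (goal_gt g)) - pr g * pmass D (goal_gt g).
apply: le_trans (_ : \sum_g gain g <= _).
  rewrite /expected_dTV big_mkcond /=; apply: ler_sum => g _.
  case: ifP => [pr_gt0|/negbT]; first by rewrite dTV_D_goal.
  rewrite -leNgt /gain => pr_le0.
  have -> : pr g = 0 by apply/eqP; rewrite eq_le pr_le0 pr_ge0.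
  by rewrite mul0r subr0; apply: psum_ge0 => s; rewrite mulr_ge0 ?emp_mass_ge0.
have swp g := psummableZ (sw g) (pmass_ge0 sD (goal_gt g)).
have pointwise s : P s * (excess s + 1) + \sum_g pmass D (goal_gt g) * w g s =
    \sum_g w g s * emp_mass s (goal_gt g) + P s.
  rewrite mulrDr mulr1; have -> : P s * excess s =
      \sum_g w g s * emp_mass s (goal_gt g) - \sum_g pmass D (goal_gt g) * w g s.
    by rewrite /excess mulr_sumr -sumrB; apply: eq_bigr => g _; rewrite /w; ring.
  by ring.
have sw_gain g := sw_emp g (goal_gt g).
have := eq_psum pointwise.
rewrite (psumD sP_excess1 (psummable_sum _ swp)) (psumD (psummable_sum _ sw_gain) sP).
rewrite !psum_sum // P1 => E.
suff -> : \sum_g gain g = \sum_g psum (fun s => w g s * emp_mass s (goal_gt g)) -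
    \sum_g psum (fun s => pmass D (goal_gt g) * w g s) by lra.
by rewrite -sumrB; apply: eq_bigr => g _; rewrite /gain psumZ ?pmass_ge0 // mulrC.
Qed.

Let expR_excess_le s mu : 0 <= mu ->
  expR (mu * excess s) <= \sum_g expR (mu * (emp_mass s (goal_gt g) - pmass D (goal_gt g))).
Proof.
move=> mu0; apply: le_trans (_ : \sum_g q s g * expR (mu * (emp_mass s (goal_gt g) -
    pmass D (goal_gt g))) <= _); last by apply: ler_sum => g _; rewrite ler_piMl ?expR_ge0.
rewrite /excess mulr_sumr (eq_bigr (fun g => q s g * (mu * (emp_mass s (goal_gt g) -
  pmass D (goal_gt g))))) => [|g _]; last by rewrite mulrCA.
exact: expR_sum_convex.
Qed.

Lemma excess_mean_le lam : (0 < #|G|)%N -> 0 < lam ->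
  psum (fun s => P s * (excess s + 1)) - 1 <= ln (#|G|%:R : R) / (lam * m%:R) + lam / 8.
Proof.
move=> G_gt0 lam_gt0; set mu := lam * m%:R; set t := m%:R * (lam ^+ 2 / 8).
have mu_gt0 : 0 < mu by rewrite mulr_gt0 // ltr0n.
pose F g s := P s * expR (mu * (emp_mass s (goal_gt g) - pmass D (goal_gt g))).
have sF g : psummable (F g) := psummable_prod_pmf_expR m_gt0 sD (goal_gt g) (ltW lam_gt0).
have pointwise s : 0 <= P s * expR (mu * (excess s + 1)) <= expR mu * \sum_g F g s.
  rewrite mulr_ge0 ?sP.1 ?expR_ge0 //= mulrDr mulr1 expRD [_ * expR mu]mulrC mulrCA.
  rewrite ler_wpM2l ?expR_ge0 //.
  by rewrite /F -mulr_sumr ler_wpM2l ?sP.1 ?expR_excess_le ?ltW.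
have sSum := psummableZ (psummable_sum (index_enum G) sF) (expR_ge0 mu).
have := expR_psum_convex (ltW mu_gt0) sP P1 excess1_ge0 sP_excess1
  (psummable_le pointwise sSum).
move/le_trans/(_ (ler_psum pointwise sSum)).
rewrite (psumZ (psummable_sum _ sF) (expR_ge0 mu)) psum_sum //.
set E := psum _ => jensen.
have sumF : \sum_g psum (F g) <= #|G|%:R * expR t.
  apply: le_trans (_ : \sum_(g : G) expR t <= _); last by rewrite sumr_const mulr_natl.
  apply: ler_sum => g _; rewrite /F /mu /t.
  exact (psum_prod_pmf_expR_le m_gt0 sD D1 (goal_gt g) (ltW lam_gt0)).
have : expR (mu * (E - 1)) <= expR (ln (#|G|%:R : R) + t).
  rewrite expRD lnK ?posrE ?ltr0n // mulrBr mulr1 expRD expRN ler_pdivrMr ?expR_gt0 //.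
  by apply: (le_trans jensen); rewrite [X in _ <= X]mulrC ler_wpM2l ?expR_ge0.
rewrite ler_expR => bound.
have -> : ln (#|G|%:R : R) / mu + lam / 8 = mu^-1 * (ln (#|G|%:R : R) + t).
  by rewrite /mu /t; field; rewrite gt_eqF ?ltr0n ?andbT // gt_eqF.
by rewrite ler_pdivlMl.
Qed.

End Kernel.

Theorem mainTheorem7 (R : realType) (X : countType) (x0 : X) (G : finType)
  (G_nonempty : (0 < #|G|)%N) (m : nat) (m_pos : (1 <= m)%N)
  (D : X -> R) (HD : is_pmf D)
  (q : {ffun 'I_m -> X} -> G -> R) (Hq : is_kernel q) :
  expected_dTV D q <= Num.sqrt (ln (#|G|%:R : R) / (2 * m%:R)).
Proof.
apply: le_trans (expected_dTV_le_excess m_pos HD Hq) _.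
apply: le_sqrt_of_forall_pos; [by rewrite ln_ge0 // ler1n | by rewrite ltr0n |].
move=> lam; exact: excess_mean_le m_pos HD Hq lam G_nonempty.
Qed.
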